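(* For all $\varepsilon'>0$ and $\delta>0$ there exists $\varepsilon=\varepsilon(\varepsilon',\delta)>0$ such that the following holds. Let $(V_1,V_2,V_3)$ be an $\varepsilon$-typical $(\varepsilon,p)$-regular triple in a graph in which every pair $(V_i,V_j)$ has density at least $\delta p$. Assume moreover that the endpoints of no edge between $V_2$ and $V_3$ have more than $4p^2|V_1|$ common neighbours in $V_1$. Then $V_1$ contains at most $\varepsilon'|V_1|$ vertices that are not $\varepsilon'$-good.
   Context: For disjoint $X,Y$, $d(X,Y)=e(X,Y)/(|X||Y|)$; $x=(1\pm a)y$ means $x\in[(1-a)y,(1+a)y]$. A pair $(X,Y)$ is $(\varepsilon,p)$-regular if $|d(X,Y)-d(X',Y')|\le\varepsilon p$ for all $X'\subset X,Y'\subset Y$ with $|X'|\ge\varepsilon|X|,|Y'|\ge\varepsilon|Y|$; a triple is $(\varepsilon,p)$-regular if all three pairs are. Write $d(V_i,V_j)=d_{ij}p$. For $\{i,j,k\}=\{1,2,3\}$, $v\in V_i$ is $\varepsilon$-typical if with $N_j=N(v)\cap V_j$, $N_k=N(v)\cap V_k$: $|N_j|=(1\pm\varepsilon)d_{ij}p|V_j|$, $|N_k|=(1\pm\varepsilon)d_{ik}p|V_k|$, and there exist $N_j'\subset N_j,N_k'\subset N_k$ with $|N_j'|\ge(1-\varepsilon)|N_j|,|N_k'|\ge(1-\varepsilon)|N_k|$ such that $(N_j',N_k')$ is $(\varepsilon,p)$-regular of density $(1\pm\varepsilon)d_{jk}p$. The triple is $\varepsilon$-typical if it is $(\varepsilon,p)$-regular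 and for each $i$ all but at most $\varepsilon|V_i|$ vertices of $V_i$ are $\varepsilon$-typical. An edge $uw$, $u\in V_j$, $w\in V_k$, is $\varepsilon'$-good if $u,w$ have at least $(1-\varepsilon')d_{ij}d_{ik}p^2|V_i|$ common neighbours in $V_i$. A vertex $v\in V_i$ is $\varepsilon'$-good if it is $\varepsilon'$-typical and at most $\varepsilon' d_{12}d_{13}d_{23}p^3|V_j||V_k|$ edges between $N(v)\cap V_j$ and $N(v)\cap V_k$ are not $\varepsilon'$-good. *)

From HB Require Import structures.
From mathcomp Require Import all_boot all_order all_algebra.
From mathcomp Require Import reals.
Set Implicit Arguments. Unset Strict Implicit. Unset Printing Implicit Defensive.
Import Order.TTheory GRing.Theory Num.Theory.
Local Open Scope ring_scope.

Section Defs.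
Variable R : realType.
Variable T : finType.
Variable e : rel T.

Definition e_between (X Y : {set T}) : nat :=
  #|[set xy : T * T | [&& xy.1 \in X, xy.2 \in Y & e xy.1 xy.2]]|.

Definition dens (X Y : {set T}) : R :=
  (e_between X Y)%:R / (#|X| * #|Y|)%:R.

Definition approx (a x y : R) : bool := ((1 - a) * y <= x) && (x <= (1 + a) * y).

Definition regular_pair (eps p : R) (X Y : {set T}) : bool :=
  [forall X' : {set T}, forall Y' : {set T},
    [&& X' \subset X, Y' \subset Y, eps * #|X|%:R <= #|X'|%:R
      & eps * #|Y|%:R <= #|Y'|%:R] ==>
    (`|dens X Y - dens X' Y'| <= eps * p)].

Definition regular_triple (eps p : R) (V1 V2 V3 : {set T}) : bool :=
  [&& regular_pair eps p V1 V2, regular_pair eps p V1 V3 & regular_pair eps p V2 V3].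

Definition nbhd (v : T) (X : {set T}) : {set T} := [set u in X | e v u].

(* v in Vi is eps-typical w.r.t. the other two classes Vj, Vk.
   Note d_ij p = dens Vi Vj, etc. *)
Definition typical_vertex (eps p : R) (Vi Vj Vk : {set T}) (v : T) : bool :=
  [&& v \in Vi,
      approx eps #|nbhd v Vj|%:R (dens Vi Vj * #|Vj|%:R),
      approx eps #|nbhd v Vk|%:R (dens Vi Vk * #|Vk|%:R) &
      [exists Nj' : {set T}, exists Nk' : {set T},
        [&& Nj' \subset nbhd v Vj, Nk' \subset nbhd v Vk,
            (1 - eps) * #|nbhd v Vj|%:R <= #|Nj'|%:R,
            (1 - eps) * #|nbhd v Vk|%:R <= #|Nk'|%:R,
            regular_pair eps p Nj' Nk' &
            approx eps (dens Nj' Nk') (dens Vj Vk)]]].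

Definition atypical_set (eps p : R) (Vi Vj Vk : {set T}) : {set T} :=
  [set v in Vi | ~~ typical_vertex eps p Vi Vj Vk v].

Definition typical_triple (eps p : R) (V1 V2 V3 : {set T}) : bool :=
  [&& regular_triple eps p V1 V2 V3,
      #|atypical_set eps p V1 V2 V3|%:R <= eps * #|V1|%:R,
      #|atypical_set eps p V2 V1 V3|%:R <= eps * #|V2|%:R &
      #|atypical_set eps p V3 V1 V2|%:R <= eps * #|V3|%:R].

Definition common_nbhd (u w : T) (X : {set T}) : {set T} :=
  [set x in X | e u x && e w x].

Definition good_edge (eps' : R) (Vi Vj Vk : {set T}) (u w : T) : bool :=
  (1 - eps') * dens Vi Vj * dens Vi Vk * #|Vi|%:R <= #|common_nbhd u w Vi|%:R.

Definition good_vertex (eps' p : R) (Vi Vj Vk : {set T}) (v : T) : bool :=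
  typical_vertex eps' p Vi Vj Vk v &&
  (#|[set uw : T * T | [&& uw.1 \in nbhd v Vj, uw.2 \in nbhd v Vk,
                           e uw.1 uw.2 & ~~ good_edge eps' Vi Vj Vk uw.1 uw.2]]|%:R
     <= eps' * (dens Vi Vj * dens Vi Vk * dens Vj Vk) * (#|Vj| * #|Vk|)%:R).

End Defs.

Arguments dens {R T} e X Y.
Arguments regular_pair {R T} e eps p X Y.
Arguments regular_triple {R T} e eps p V1 V2 V3.
Arguments typical_vertex {R T} e eps p Vi Vj Vk v.
Arguments atypical_set {R T} e eps p Vi Vj Vk.
Arguments typical_triple {R T} e eps p V1 V2 V3.
Arguments good_edge {R T} e eps' Vi Vj Vk u w.
Arguments good_vertex {R T} e eps' p Vi Vj Vk v.
Arguments approx {R} a x y.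

From HB Require Import structures.
From mathcomp Require Import all_boot all_order all_algebra.
From mathcomp Require Import reals.
From mathcomp Require Import ring lra.
Import Order.TTheory GRing.Theory Num.Theory.
Local Open Scope ring_scope.
Set Implicit Arguments. Unset Strict Implicit. Unset Printing Implicit Defensive.

(* Call an edge [u w] between [V2] and [V3] bad if [u] and [w] have too few
   common neighbours in [V1].  If [u] is typical, its neighbourhoods in [V1] and
   [V3] contain large sets [N1], [N3] forming a regular pair of the expected
   density, so all but an [eps]-fraction of the [w] in [N3] have many neighbours
   in [N1], hence in common with [u]: [u] lies on few bad edges.  The atypical
   vertices of [V2] are few, so by regularity of [(V2, V3)] they carry few edges.
   Altogether there are [O(eps) d23 |V2| |V3|] bad edges.  A vertex [v] of [V1] is
   not good only if it is atypical or its link contains many bad edges; by the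
   codegree bound every bad edge lies in at most [4 p^2 |V1|] links, so double
   counting leaves few vertices of the second kind. *)

Section Counting.
Variable R : numDomainType.

Lemma natr_card_sum (T : finType) (A : {set T}) : (#|A|%:R : R) = \sum_x (x \in A)%:R.
Proof.
by rewrite -sum1_card natr_sum big_mkcond; apply: eq_bigr => x _; case: (x \in A).
Qed.

Lemma card_set_sum (T : finType) (P : pred T) : (#|[set x | P x]|%:R : R) = \sum_x (P x)%:R.
Proof. by rewrite natr_card_sum; apply: eq_bigr => x _; rewrite inE. Qed.

Lemma card_pair_sum (T : finType) (P : T -> T -> bool) :
  (#|[set uw : T * T | P uw.1 uw.2]|%:R : R) = \sum_u \sum_w (P u w)%:R.
Proof. by rewrite (card_set_sum (fun uw : T * T => P uw.1 uw.2)) pair_big. Qed.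

Lemma card_gt_le_sum (T : finType) (A : {set T}) (f : T -> R) (t : R) :
  (forall x, x \in A -> 0 <= f x) ->
  #|[set x in A | t < f x]|%:R * t <= \sum_(x in A) f x.
Proof.
move=> f_ge0; rewrite card_set_sum mulr_suml [X in _ <= X]big_mkcond /=.
apply: ler_sum => x _; case: (boolP (x \in A)) => /= xA; last by rewrite mul0r.
by case: (boolP (t < f x)) => [/ltW|_]; rewrite ?mul1r ?mul0r ?f_ge0.
Qed.

Lemma exists_set_between_card (T : finType) (A V : {set T}) k :
  A \subset V -> (#|A| <= k <= #|V|)%N -> exists B : {set T}, [/\ A \subset B, B \subset V & #|B| = k].
Proof.
move=> AV /andP[Ak kV].
have : (k - #|A| <= #|V :\: A|)%N by rewrite cardsD (setIidPr AV) leq_sub2r.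
case/card_geqP=> s [s_uniq s_size sVA].
have sV x : x \in [set y in s] -> x \in V :\: A by rewrite inE => /sVA.
exists (A :|: [set y in s]); split.
- exact: subsetUl.
- by rewrite subUset AV /=; apply/subsetP => x /sV; rewrite inE => /andP[].
rewrite cardsU cardsE (card_uniqP s_uniq) s_size.
suff -> : A :&: [set y in s] = set0 by rewrite cards0 subn0 subnKC.
apply/setP => x; rewrite !inE; case: (boolP (x \in s)) => [/sVA|]; last by rewrite andbF.
by rewrite !inE => /andP[/negbTE ->].
Qed.

End Counting.

Lemma exists_set_between_scaled_card (R : realFieldType) (T : finType) (a : R) (A V : {set T}) :
  a <= 1 -> 1 <= a * #|V|%:R -> A \subset V -> #|A|%:R <= a * #|V|%:R ->
  exists B : {set T}, [/\ A \subset B, B \subset V, a * #|V|%:R <= #|B|%:R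
                        & #|B|%:R <= 2 * a * #|V|%:R].
Proof.
move=> a_le1 aV_ge1 AV A_le.
have V_ge0 : 0 <= #|V|%:R :> R by [].
(* [k] is the least integer above [a |V|], so [k < a |V| + 1 <= 2 a |V|]. *)
have exk : exists k, a * #|V|%:R <= k%:R by exists #|V|; nra.
pose k := ex_minn exk.
have [k_ge k_min] : a * #|V|%:R <= k%:R /\ forall j, a * #|V|%:R <= j%:R -> (k <= j)%N.
  by rewrite /k; case: ex_minnP.
have k_gt0 : (0 < k)%N by rewrite lt0n -(eqr_nat R); apply/eqP => k0; move: k_ge; rewrite k0; lra.
have k_lt : k.-1%:R < a * #|V|%:R.
  by rewrite ltNge; apply/negP => /k_min; rewrite -ltnS prednK // ltnn.
have [B [AB BV cardB]] : exists B : {set T}, [/\ A \subset B, B \subset V & #|B| = k].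
  apply: exists_set_between_card => //; apply/andP; split.
    by rewrite -(ler_nat R); apply: le_trans A_le k_ge.
  by apply: k_min; nra.
exists B; split; rewrite // cardB //.
have : k%:R = k.-1%:R + 1 :> R by rewrite natr1 prednK.
lra.
Qed.

Section Graph.
Variables (R : realType) (T : finType) (e : rel T).

Lemma e_between_sum (X Y : {set T}) :
  ((e_between e X Y)%:R : R) = \sum_(x in X) #|nbhd e x Y|%:R.
Proof.
rewrite /e_between (card_pair_sum R (fun x y => [&& x \in X, y \in Y & e x y])).
rewrite [RHS]big_mkcond; apply: eq_bigr => x _ /=.
case: (boolP (x \in X)) => xX /=; last by rewrite big1.
by rewrite card_set_sum.
Qed.

Lemma e_between_le (X Y : {set T}) : (e_between e X Y <= #|X| * #|Y|)%N.
Proof.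
rewrite -cardsX /e_between; apply: subset_leq_card; apply/subsetP => -[x y].
by rewrite !inE /= => /and3P[-> ->].
Qed.

Lemma e_betweenS (X X' Y Y' : {set T}) :
  X \subset X' -> Y \subset Y' -> (e_between e X Y <= e_between e X' Y')%N.
Proof.
move=> /subsetP sX /subsetP sY; apply: subset_leq_card; apply/subsetP => -[x y].
by rewrite !inE /= => /and3P[/sX -> /sY -> ->].
Qed.

Lemma e_between_dens (X Y : {set T}) :
  ((e_between e X Y)%:R : R) = dens e X Y * (#|X| * #|Y|)%:R.
Proof.
rewrite /dens; have [XY0|XY_neq0] := eqVneq (#|X| * #|Y|)%N 0%N.
  by have := e_between_le X Y; rewrite XY0 leqn0 => /eqP ->; rewrite mulr0.
by rewrite divfK // pnatr_eq0.
Qed.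

Lemma dens_ge0 (X Y : {set T}) : 0 <= dens e X Y :> R.
Proof. by rewrite /dens divr_ge0. Qed.

Lemma dens_gt0_card (X Y : {set T}) : 0 < dens e X Y :> R -> (0 < #|X| * #|Y|)%N.
Proof. by rewrite lt0n /dens; apply: contraTneq => ->; rewrite invr0 mulr0 ltxx. Qed.

Lemma dens_le_of_nbhd (X Y : {set T}) (t : R) : 0 <= t ->
  (forall x, x \in X -> #|nbhd e x Y|%:R <= t * #|Y|%:R) -> dens e X Y <= t.
Proof.
move=> t_ge0 nbhd_le; rewrite /dens.
have [XY0|XY_neq0] := eqVneq (#|X| * #|Y|)%N 0%N; first by rewrite XY0 invr0 mulr0.
rewrite ler_pdivrMr ?ltr0n ?lt0n // e_between_sum.
apply: le_trans (ler_sum _ nbhd_le) _.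
by rewrite sumr_const -[_ *+ #|X|]mulr_natl natrM mulrCA.
Qed.

Hypothesis e_sym : symmetric e.

Lemma e_between_sym (X Y : {set T}) : e_between e X Y = e_between e Y X.
Proof.
apply/eqP; rewrite -(eqr_nat R) /e_between.
rewrite !(card_pair_sum R (fun x y => [&& x \in _, y \in _ & e x y])) exchange_big /=.
by apply/eqP; apply: eq_bigr => x _; apply: eq_bigr => y _; rewrite e_sym andbCA.
Qed.

Lemma dens_sym (X Y : {set T}) : dens e X Y = dens e Y X :> R.
Proof. by rewrite /dens e_between_sym mulnC. Qed.

End Graph.

Arguments e_between_sum {R T} e X Y.
Arguments e_between_dens {R T} e X Y.
Arguments dens_ge0 {R T} e X Y.
Arguments dens_sym {R T e} e_sym X Y.

Section Regularity.
Variables (R : realType) (T : finType) (e : rel T).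

Lemma approx_weaken (a b x y : R) : 0 <= y -> a <= b -> approx a x y -> approx b x y.
Proof. by move=> y_ge0 ab /andP[lo hi]; apply/andP; split; nra. Qed.

Lemma regular_pair_weaken (a b p : R) (X Y : {set T}) :
  0 <= p -> a <= b -> regular_pair e a p X Y -> regular_pair e b p X Y.
Proof.
move=> p_ge0 ab /forallP reg; apply/forallP => X'; apply/forallP => Y'.
have /forallP/(_ Y')/implyP reg' := reg X'; apply/implyP => /and4P[sX sY cX cY].
have le_sc (Z : {set T}) : a * #|Z|%:R <= b * #|Z|%:R by rewrite ler_wpM2r.
apply: le_trans (reg' _) (ler_wpM2r p_ge0 ab).
by rewrite sX sY (le_trans (le_sc X) cX) (le_trans (le_sc Y) cY).
Qed.

Lemma typical_vertex_weaken (a b p : R) (Vi Vj Vk : {set T}) v :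
  0 <= p -> a <= b -> typical_vertex e a p Vi Vj Vk v -> typical_vertex e b p Vi Vj Vk v.
Proof.
move=> p_ge0 ab /and4P[vVi apj apk /existsP[Nj /existsP[Nk /and5P[sj sk cj ck /andP[reg apd]]]]].
have le_sc (Z : {set T}) : (1 - b) * #|Z|%:R <= (1 - a) * #|Z|%:R by rewrite ler_wpM2r // lerB.
apply/and4P; split => //.
- by apply: (approx_weaken _ ab apj); rewrite mulr_ge0 ?dens_ge0.
- by apply: (approx_weaken _ ab apk); rewrite mulr_ge0 ?dens_ge0.
apply/existsP; exists Nj; apply/existsP; exists Nk.
rewrite sj sk (le_trans (le_sc _) cj) (le_trans (le_sc _) ck) (regular_pair_weaken p_ge0 ab reg).
by rewrite (approx_weaken (dens_ge0 e _ _) ab apd).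
Qed.

Variables (eps p : R) (X Y : {set T}).
Hypotheses (eps_ge0 : 0 <= eps) (eps_le1 : eps <= 1) (p_ge0 : 0 <= p).
Hypothesis reg : regular_pair e eps p X Y.

Lemma regular_pair_dens (X' Y' : {set T}) :
  X' \subset X -> Y' \subset Y -> eps * #|X|%:R <= #|X'|%:R -> eps * #|Y|%:R <= #|Y'|%:R ->
  `|dens e X Y - dens e X' Y'| <= eps * p.
Proof. by move=> sX sY cX cY; move/forallP/(_ X')/forallP/(_ Y')/implyP: reg; apply; apply/and4P. Qed.

Lemma le_eps_card (Z : {set T}) : eps * #|Z|%:R <= #|Z|%:R.
Proof. by rewrite ler_piMl. Qed.

Lemma regular_pair_low_degree_card (W : {set T}) (t : R) :
  symmetric e -> W \subset Y -> 0 <= t -> t < dens e X Y - eps * p ->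
  (forall w, w \in W -> #|nbhd e w X|%:R <= t * #|X|%:R) -> #|W|%:R < eps * #|Y|%:R.
Proof.
move=> e_sym WY t_ge0 t_lt low; rewrite ltNge; apply/negP => W_ge.
have := regular_pair_dens (subxx X) WY (le_eps_card X) W_ge.
rewrite (dens_sym e_sym X W) ler_norml => /andP[_].
have := dens_le_of_nbhd t_ge0 low; lra.
Qed.

Lemma regular_pair_e_between_small_set (A : {set T}) :
  A \subset X -> #|A|%:R <= eps * #|X|%:R ->
  (e_between e A Y)%:R <= 2 * eps * #|X|%:R * (dens e X Y + eps * p) * #|Y|%:R.
Proof.
move=> AX A_le.
have rhs_ge0 : 0 <= 2 * eps * #|X|%:R * (dens e X Y + eps * p) * #|Y|%:R.
  by rewrite !mulr_ge0 // addr_ge0 ?dens_ge0 ?mulr_ge0.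
have [->|/set0Pn[a aA]] := eqVneq A set0.
  by have := e_between_le e set0 Y; rewrite cards0 mul0n leqn0 => /eqP ->.
have epsX_ge1 : 1 <= eps * #|X|%:R.
  by apply: le_trans A_le; rewrite ler1n card_gt0; apply/set0Pn; exists a.
(* Regularity only speaks about sets of size at least [eps |X|]: enlarge [A]. *)
have [B [AB BX B_ge B_le]] := exists_set_between_scaled_card eps_le1 epsX_ge1 AX A_le.
have := regular_pair_dens BX (subxx Y) B_ge (le_eps_card Y).
rewrite ler_norml => /andP[dB _].
apply: le_trans (_ : (e_between e B Y)%:R <= _); first by rewrite ler_nat e_betweenS.
rewrite e_between_dens natrM mulrA.
have dB_le : dens e B Y * #|B|%:R <= (dens e X Y + eps * p) * (2 * eps * #|X|%:R).
  by apply: ler_pM; rewrite ?dens_ge0 //; lra.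
by have := ler_wpM2r (ler0n R #|Y|) dB_le; rewrite [(_ + _) * _]mulrC.
Qed.

End Regularity.

Section Link.
Variables (R : realType) (T : finType) (e : rel T) (V1 V2 V3 : {set T}).
Variables (eps eta eps' p delta : R).
Hypothesis e_sym : symmetric e.

Definition bad_edges (X Y : {set T}) : {set T * T} :=
  [set uw : T * T | [&& uw.1 \in X, uw.2 \in Y, e uw.1 uw.2
                      & ~~ good_edge e eps' V1 V2 V3 uw.1 uw.2]].

Definition bad_nbhd (u : T) (Y : {set T}) : {set T} :=
  [set w in nbhd e u Y | ~~ good_edge e eps' V1 V2 V3 u w].

Lemma card_bad_edges (X Y : {set T}) :
  (#|bad_edges X Y|%:R : R) = \sum_(u in X) #|bad_nbhd u Y|%:R.
Proof.
rewrite (card_pair_sum R (fun u w => [&& u \in X, w \in Y, e u w & ~~ good_edge e eps' V1 V2 V3 u w])).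
rewrite [RHS]big_mkcond; apply: eq_bigr => u _ /=.
case: (boolP (u \in X)) => uX /=; last by rewrite big1.
by rewrite card_set_sum; apply: eq_bigr => w _; rewrite inE andbA.
Qed.

Lemma in_bad_edges_nbhd v (X Y : {set T}) uw :
  (uw \in bad_edges (nbhd e v X) (nbhd e v Y)) = (uw \in bad_edges X Y) && e uw.1 v && e uw.2 v.
Proof.
rewrite !inE (e_sym v uw.1) (e_sym v uw.2).
by case: (uw.1 \in X); case: (uw.2 \in Y); case: (e uw.1 v); case: (e uw.2 v); rewrite /= ?andbT ?andbF.
Qed.

Lemma sum_card_bad_edges_nbhd :
  \sum_(v in V1) (#|bad_edges (nbhd e v V2) (nbhd e v V3)|%:R : R)
    = \sum_(uw in bad_edges V2 V3) #|common_nbhd e uw.1 uw.2 V1|%:R.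
Proof.
under eq_bigr => v _ do rewrite natr_card_sum.
rewrite exchange_big [RHS]big_mkcond; apply: eq_bigr => uw _ /=.
under eq_bigr => v _ do rewrite in_bad_edges_nbhd.
case: (uw \in bad_edges V2 V3) => /=; last by rewrite big1.
by rewrite card_set_sum big_mkcond; apply: eq_bigr => v _; case: (v \in V1).
Qed.

Hypotheses (eps_ge0 : 0 <= eps) (eps_le1 : eps <= 1) (eta_le1 : eta <= 1).
Hypothesis eps'_le : 1 - eps' <= (1 - eta) * (1 - eps) ^+ 2.

Let d12 := dens e V1 V2 : R.
Let d13 := dens e V1 V3 : R.

Lemma good_edge_of_nbhd_large u w (N1 : {set T}) :
  N1 \subset nbhd e u V1 -> (1 - eps) * #|nbhd e u V1|%:R <= #|N1|%:R ->
  approx eps #|nbhd e u V1|%:R (dens e V2 V1 * #|V1|%:R) ->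
  (1 - eta) * d13 * #|N1|%:R < #|nbhd e w N1|%:R -> good_edge e eps' V1 V2 V3 u w.
Proof.
move=> N1u N1_ge /andP[nu_ge _] w_large; rewrite /good_edge.
have common_ge : #|nbhd e w N1|%:R <= #|common_nbhd e u w V1|%:R :> R.
  rewrite ler_nat; apply: subset_leq_card; apply/subsetP => x; rewrite !inE => /andP[xN1 ewx].
  by move/subsetP: N1u => /(_ x xN1); rewrite !inE ewx andbT.
rewrite (dens_sym e_sym V2) -/d12 in nu_ge.
have d12_ge0 : 0 <= d12 by apply: dens_ge0.
have d13_ge0 : 0 <= d13 by apply: dens_ge0.
have V1_ge0 : 0 <= #|V1|%:R :> R by [].
have c_ge0 : 0 <= (1 - eta) * d13 by rewrite mulr_ge0 // subr_ge0.
have step1 : (1 - eta) * d13 * ((1 - eps) * #|nbhd e u V1|%:R) <= (1 - eta) * d13 * #|N1|%:R.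
  exact: ler_wpM2l.
have step2 : (1 - eta) * d13 * (1 - eps) * ((1 - eps) * d12 * #|V1|%:R)
             <= (1 - eta) * d13 * (1 - eps) * #|nbhd e u V1|%:R.
  by apply: ler_wpM2l; [rewrite mulr_ge0 // subr_ge0 | rewrite -mulrA].
have step3 : (1 - eps') * (d12 * d13 * #|V1|%:R)
             <= (1 - eta) * (1 - eps) ^+ 2 * (d12 * d13 * #|V1|%:R).
  by apply: ler_wpM2r => //; rewrite mulr_ge0 // mulr_ge0.
rewrite -/d12 -/d13; have := le_trans (ltW w_large) common_ge; lra.
Qed.

Hypotheses (p_gt0 : 0 < p) (delta_gt0 : 0 < delta) (d13_ge : delta * p <= d13).
Hypothesis eps_lt : eps < (eta - eps) * delta.

Lemma typical_vertex_bad_nbhd_card u : typical_vertex e eps p V2 V1 V3 u ->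
  #|bad_nbhd u V3|%:R <= 2 * eps * #|nbhd e u V3|%:R.
Proof.
case/and4P=> _ nu1 _ /existsP[N1 /existsP[N3 /and5P[N1u N3u N1_ge N3_ge /andP[reg dN]]]].
(* Edges from [u] to [N3 :\: W] are good, and regularity of [(N1, N3)] makes [W] small. *)
pose W := [set w in N3 | #|nbhd e w N1|%:R <= (1 - eta) * d13 * #|N1|%:R].
have WN3 : W \subset N3 by apply/subsetP => w; rewrite inE => /andP[].
have W_small : #|W|%:R <= eps * #|N3|%:R.
  have eta_gap : eps * p < (eta - eps) * d13.
    have gap_gt0 : 0 < eta - eps.
      rewrite ltNge; apply/negP => gap_le0.
      have : (eta - eps) * delta <= 0 by rewrite mulr_le0_ge0 // ltW.
      by move: eps_lt eps_ge0; lra.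
    have : eps * p < (eta - eps) * delta * p by rewrite ltr_pM2r.
    have : (eta - eps) * (delta * p) <= (eta - eps) * d13 by rewrite ler_wpM2l // ltW.
    lra.
  have W_low w : w \in W -> #|nbhd e w N1|%:R <= (1 - eta) * d13 * #|N1|%:R.
    by rewrite inE => /andP[].
  apply/ltW/(regular_pair_low_degree_card eps_le1 reg e_sym WN3 _ _ W_low).
    by rewrite mulr_ge0 ?dens_ge0 // subr_ge0.
  by move/andP: dN => [dN _]; move: eta_gap; rewrite /d13; lra.
have bad_sub : bad_nbhd u V3 \subset (nbhd e u V3 :\: N3) :|: W.
  apply/subsetP => w; rewrite inE => /andP[wu w_bad].
  rewrite in_setU in_setD wu andbT; case: (boolP (w \in N3)) => //= wN3.
  apply: contraR w_bad => wW; apply: (good_edge_of_nbhd_large N1u N1_ge nu1).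
  by move: wW; rewrite inE wN3 /= -real_ltNge ?num_real.
apply: le_trans (_ : (#|nbhd e u V3 :\: N3|%:R + #|W|%:R : R) <= _).
  by rewrite -natrD ler_nat (leq_trans (subset_leq_card bad_sub)) // cardsU leq_subr.
have N3_le : #|N3|%:R <= #|nbhd e u V3|%:R :> R by rewrite ler_nat subset_leq_card.
rewrite cardsD (setIidPr N3u) natrB ?subset_leq_card //.
by move: W_small N3_ge (ler_wpM2l eps_ge0 N3_le); lra.
Qed.

Hypotheses (eps_le_delta : eps <= delta) (d23_ge : delta * p <= dens e V2 V3).
Hypothesis reg23 : regular_pair e eps p V2 V3.
Hypothesis atypical2_small : #|atypical_set e eps p V2 V1 V3|%:R <= eps * #|V2|%:R.

Lemma card_bad_edges_le :
  #|bad_edges V2 V3|%:R <= 6 * eps * dens e V2 V3 * (#|V2| * #|V3|)%:R.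
Proof.
set A := atypical_set e eps p V2 V1 V3.
have AV2 : A \subset V2 by apply/subsetP => u; rewrite inE => /andP[].
have bad_A : \sum_(u in A) #|bad_nbhd u V3|%:R <= (e_between e A V3)%:R :> R.
  rewrite e_between_sum; apply: ler_sum => u _; rewrite ler_nat subset_leq_card //.
  by apply/subsetP => w; rewrite inE => /andP[].
have bad_typical : \sum_(u in V2 :\: A) #|bad_nbhd u V3|%:R
                   <= 2 * eps * \sum_(u in V2 :\: A) #|nbhd e u V3|%:R :> R.
  rewrite mulr_sumr; apply: ler_sum => u; rewrite !inE => /andP[u_typ uV2].
  by apply: typical_vertex_bad_nbhd_card; move: u_typ; rewrite uV2 negbK.
have e23 := e_between_sum (R := R) e V2 V3.
rewrite (big_setID A) (setIidPr AV2) /= e_between_dens in e23.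
rewrite card_bad_edges (big_setID A) (setIidPr AV2) /=.
have eA := regular_pair_e_between_small_set eps_ge0 eps_le1 (ltW p_gt0) reg23 AV2 atypical2_small.
have sum_typical_le : \sum_(u in V2 :\: A) #|nbhd e u V3|%:R
                      <= dens e V2 V3 * (#|V2| * #|V3|)%:R :> R.
  by rewrite e23 lerDr sumr_ge0.
have eps_p : eps * p <= dens e V2 V3.
  exact: le_trans (ler_wpM2r (ltW p_gt0) eps_le_delta) d23_ge.
have : 2 * eps * #|V2|%:R * (dens e V2 V3 + eps * p) * #|V3|%:R
       <= 4 * eps * dens e V2 V3 * (#|V2| * #|V3|)%:R.
  rewrite natrM; have : 0 <= eps * #|V2|%:R * #|V3|%:R by rewrite !mulr_ge0.
  nra.
have := ler_wpM2l (mulr_ge0 (ler0n R 2) eps_ge0) sum_typical_le.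
move: bad_A bad_typical eA; lra.
Qed.

Hypotheses (eps'_gt0 : 0 < eps') (eps_le_eps' : eps <= eps').
Hypothesis eps_small : 24 * eps <= (eps' - eps) * eps' * delta ^+ 2.
Hypothesis d12_ge : delta * p <= dens e V1 V2.
Hypothesis atypical1_small : #|atypical_set e eps p V1 V2 V3|%:R <= eps * #|V1|%:R.
Hypothesis codegree_le : forall u w, u \in V2 -> w \in V3 -> e u w ->
  #|common_nbhd e u w V1|%:R <= 4 * p ^+ 2 * #|V1|%:R.

Lemma card_not_good_vertices_le :
  #|[set v in V1 | ~~ good_vertex e eps' p V1 V2 V3 v]|%:R <= eps' * #|V1|%:R.
Proof.
pose n : R := (#|V2| * #|V3|)%:R.
pose thr := eps' * (dens e V1 V2 * dens e V1 V3 * dens e V2 V3) * n.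
pose bad_link v : R := #|bad_edges (nbhd e v V2) (nbhd e v V3)|%:R.
pose G := [set v in V1 | thr < bad_link v].
have not_good_sub : [set v in V1 | ~~ good_vertex e eps' p V1 V2 V3 v]
    \subset atypical_set e eps p V1 V2 V3 :|: G.
  apply/subsetP => v; rewrite !inE => /andP[vV1 not_good]; rewrite vV1 /=.
  case: (boolP (typical_vertex e eps p V1 V2 V3 v)) => //= v_typ.
  rewrite ltNge; apply: contra not_good => few_bad; apply/andP; split => //.
  exact: typical_vertex_weaken (ltW p_gt0) eps_le_eps' v_typ.
have dp_gt0 : 0 < delta * p by rewrite mulr_gt0.
have d23_gt0 : 0 < dens e V2 V3 := lt_le_trans dp_gt0 d23_ge.
have n_gt0 : 0 < n by rewrite ltr0n (dens_gt0_card d23_gt0).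
have thr_ge : eps' * (delta * p) ^+ 2 * dens e V2 V3 * n <= thr.
  have sq : (delta * p) ^+ 2 <= dens e V1 V2 * dens e V1 V3.
    by rewrite expr2 ler_pM // ltW.
  rewrite /thr; apply: ler_wpM2r; first exact: ltW.
  rewrite -mulrA; apply: ler_wpM2l; first exact: ltW.
  by apply: ler_wpM2r sq; exact: ltW.
have thr_gt0 : 0 < thr.
  apply: lt_le_trans thr_ge; apply: mulr_gt0 n_gt0; apply: mulr_gt0 d23_gt0.
  exact: mulr_gt0 eps'_gt0 (exprn_gt0 2 dp_gt0).
have G_le : #|G|%:R * thr <= 24 * eps * p ^+ 2 * dens e V2 V3 * n * #|V1|%:R.
  apply: le_trans (@card_gt_le_sum _ _ V1 bad_link thr (fun _ _ => ler0n _ _)) _.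
  rewrite sum_card_bad_edges_nbhd.
  apply: le_trans (_ : _ <= \sum_(uw in bad_edges V2 V3) 4 * p ^+ 2 * #|V1|%:R) _.
    by apply: ler_sum => -[u w]; rewrite inE => /and4P[uV2 wV3 euw _]; apply: codegree_le.
  rewrite sumr_const -mulr_natl.
  have := ler_wpM2r (mulr_ge0 (mulr_ge0 (ler0n R 4) (exprn_ge0 2 (ltW p_gt0))) (ler0n R #|V1|)) card_bad_edges_le.
  rewrite -/n; lra.
have G_small : #|G|%:R <= (eps' - eps) * #|V1|%:R.
  rewrite -(ler_pM2r thr_gt0); apply: le_trans G_le _.
  have K_ge0 : 0 <= p ^+ 2 * dens e V2 V3 * n * #|V1|%:R.
    apply: mulr_ge0 (ler0n _ _); apply: mulr_ge0 (ltW n_gt0).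
    exact: mulr_ge0 (exprn_ge0 2 (ltW p_gt0)) (ltW d23_gt0).
  have eps'_eps : 0 <= (eps' - eps) * #|V1|%:R by rewrite mulr_ge0 // subr_ge0.
  move: (ler_wpM2r K_ge0 eps_small) (ler_wpM2l eps'_eps thr_ge); lra.
apply: le_trans (_ : _ <= #|atypical_set e eps p V1 V2 V3|%:R + #|G|%:R) _.
  by rewrite -natrD ler_nat (leq_trans (subset_leq_card not_good_sub)) // cardsU leq_subr.
by move: atypical1_small G_small; lra.
Qed.

End Link.

Lemma small_parameters (R : realFieldType) (eps' delta : R) : 0 < eps' -> 0 < delta ->
  exists eps eta : R,
    [/\ 0 < eps, eps <= 1, eps <= eps', eps <= delta & 24 * eps <= (eps' - eps) * eps' * delta ^+ 2]
    /\ [/\ eta <= 1, 1 - eps' <= (1 - eta) * (1 - eps) ^+ 2 & eps < (eta - eps) * delta].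
Proof.
move=> eps'_gt0 delta_gt0.
pose a := Num.min eps' 1; pose d := Num.min delta 1.
have [a_gt0 a_le1 a_le] : [/\ 0 < a, a <= 1 & a <= eps'].
  by rewrite lt_min eps'_gt0 ltr01 !ge_min !lexx ?orbT.
have [d_gt0 d_le1 d_le] : [/\ 0 < d, d <= 1 & d <= delta].
  by rewrite lt_min delta_gt0 ltr01 !ge_min !lexx ?orbT.
have ad_gt0 : 0 < a * d by rewrite mulr_gt0.
have ad_le : a * d <= Num.min a d.
  by rewrite le_min ler_piMr ?ler_piMl // ltW.
have [ad_le_a ad_le_d] : a * d <= a /\ a * d <= d by move: ad_le; rewrite le_min => /andP[].
pose eps := (a * d) ^+ 2 / 64.
have eps_gt0 : 0 < eps by rewrite divr_gt0 ?exprn_gt0.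
have eps_le : eps <= a * d / 64.
  rewrite /eps; apply: ler_wpM2r; first by rewrite invr_ge0.
  by rewrite expr2; apply: ler_piMl; [exact: ltW | exact: le_trans ad_le_a a_le1].
exists eps, (a / 2); split; split => //; try lra.
- have a_sq : 63 / 64 * a * a <= (eps' - eps) * eps'.
    by apply: ler_pM; lra.
  have d_sq : d ^+ 2 <= delta ^+ 2 by rewrite !expr2; apply: ler_pM; lra.
  have a_sq_ge0 : 0 <= 63 / 64 * a * a by rewrite mulr_ge0 //; lra.
  have := ler_pM a_sq_ge0 (exprn_ge0 2 (ltW d_gt0)) a_sq d_sq.
  have eps_def : eps = (a * d) ^+ 2 / 64 by [].
  lra.
- have : 0 <= (1 - a / 2) * eps ^+ 2 by rewrite mulr_ge0 ?exprn_ge0 ?ltW //; lra.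
  have : 0 <= a * eps by rewrite mulr_ge0 ?ltW.
  lra.
- have gap : 31 / 64 * a <= a / 2 - eps by lra.
  have a_ge0 : 0 <= 31 / 64 * a by lra.
  have := ler_pM a_ge0 (ltW d_gt0) gap d_le.
  lra.
Qed.

Theorem proposition2p13 (R : realType) (eps' delta : R) :
  0 < eps' -> 0 < delta ->
  exists eps : R, 0 < eps /\
  forall (T : finType) (e : rel T) (V1 V2 V3 : {set T}) (p : R),
    symmetric e -> irreflexive e ->
    0 < p -> p <= 1 ->
    [disjoint V1 & V2] -> [disjoint V1 & V3] -> [disjoint V2 & V3] ->
    typical_triple e eps p V1 V2 V3 ->
    delta * p <= dens e V1 V2 -> delta * p <= dens e V1 V3 ->
    delta * p <= dens e V2 V3 ->
    (forall u w, u \in V2 -> w \in V3 -> e u w ->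
       #|common_nbhd e u w V1|%:R <= 4 * p ^+ 2 * #|V1|%:R) ->
    #|[set v in V1 | ~~ good_vertex e eps' p V1 V2 V3 v]|%:R <= eps' * #|V1|%:R.
Proof.
move=> eps'_gt0 delta_gt0.
have [eps [eta [[eps_gt0 eps_le1 eps_le_eps' eps_le_delta eps_small] [eta_le1 eps'_le eps_lt]]]]
  := small_parameters eps'_gt0 delta_gt0.
have eps_ge0 := ltW eps_gt0.
exists eps; split => // T e V1 V2 V3 p e_sym _ p_gt0 _ _ _ _.
case/and4P=> /and3P[_ _ reg23] atypical1_small atypical2_small _ d12_ge d13_ge d23_ge codegree_le.
by apply: (card_not_good_vertices_le (eps := eps) (eta := eta) (delta := delta)).
Qed.
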